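(* Let $X$ be a separable completely metrizable space and $T:X\to X$ continuous. The following are equivalent: (i) $T$ is quasi-rigid; (ii) $T$ is topologically quasi-rigid; (iii) $T_{(N)}$ is topologically recurrent for every $N\in\mathbb{N}$; (iv) $T_{(N)}$ is recurrent for every $N\in\mathbb{N}$.
   Context: For $N\in\mathbb{N}$, $T_{(N)}:X^N\to X^N$, $T_{(N)}(x_1,\dots,x_N)=(Tx_1,\dots,Tx_N)$. A point $x$ is recurrent for a map $S$ if $x\in\overline{\{S^nx:n\geq1\}}$; $S$ is recurrent if its set of recurrent points is dense. $S$ is topologically recurrent if for every non-empty open $U$ there is $n\in\mathbb{N}$ with $S^n(U)\cap U\neq\varnothing$. $T$ is quasi-rigid if there exist a strictly increasing sequence $(n_k)$ of positive integers and a dense $Y\subset X$ with $T^{n_k}x\to x$ for all $x\in Y$. $T$ is topologically quasi-rigid if there exists a strictly increasing sequence $(n_k)$ such that for every non-empty open $U$ there is $k_U$ with $T^{n_k}(U)\cap U\neq\varnothing$ for all $k\geq k_U$. *)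

From HB Require Import structures.
From mathcomp Require Import all_boot all_order all_algebra.
From mathcomp Require Import all_classical all_reals all_analysis.
Set Implicit Arguments. Unset Strict Implicit. Unset Printing Implicit Defensive.
Import Order.TTheory GRing.Theory Num.Theory.
Local Open Scope classical_set_scope.

Definition separable_space (Y : topologicalType) : Prop :=
  exists D : set Y, countable D /\ dense D.

Definition diagN (X : topologicalType) (N : nat) (T : X -> X) :
  {ptws 'I_N -> X} -> {ptws 'I_N -> X} :=
  fun x i => T (x i).
Arguments diagN {X} N T _ _.

Definition recurrent_point (Y : topologicalType) (S : Y -> Y) (x : Y) : Prop :=
  closure [set iter n.+1 S x | n in [set: nat]] x.

Definition recurrent (Y : topologicalType) (S : Y -> Y) : Prop :=
  dense [set x | recurrent_point S x].

Definition top_recurrent (Y : topologicalType) (S : Y -> Y) : Prop :=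
  forall U : set Y, open U -> U !=set0 ->
    exists n : nat, (0 < n)%N /\ (iter n S @` U) `&` U !=set0.

Definition quasi_rigid (Y : topologicalType) (T : Y -> Y) : Prop :=
  exists (n : nat -> nat) (D : set Y),
    {homo n : a b / (a < b)%N} /\ dense D /\
    forall x, D x -> (fun k => iter (n k) T x) @ \oo --> x.

Definition top_quasi_rigid (Y : topologicalType) (T : Y -> Y) : Prop :=
  exists n : nat -> nat,
    {homo n : a b / (a < b)%N} /\
    forall U : set Y, open U -> U !=set0 ->
      exists kU : nat, forall k, (kU <= k)%N -> (iter (n k) T @` U) `&` U !=set0.

From HB Require Import structures.
From mathcomp Require Import all_boot all_order all_algebra.
From mathcomp Require Import all_classical all_reals all_analysis.
From mathcomp Require Import lra.
Import Order.TTheory GRing.Theory Num.Theory.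
Local Open Scope classical_set_scope.
Local Open Scope ring_scope.

(* We prove the cycle of implications (i) -> (iv) -> (iii) -> (ii) -> (i),
   together with the trivial (i) -> (ii).
   - (i) -> (ii) and (iv) -> (iii) hold in every topological space: a dense
     set of "good" points meets every non-empty open set.
   - (i) -> (iv): a point of X^N all of whose coordinates are quasi-rigid
     points is recurrent for T_(N), and such points are dense in X^N.
   - (iii) -> (ii): applying the topological recurrence of T_(N) to
     successively smaller boxes gives, for finitely many non-empty open sets,
     a common return time beyond any bound; a diagonal choice along a
     countable base of balls (separability) yields the sequence (n_k).
   - (ii) -> (i), the heart of the proof: along the sequence given by (ii)
     we refine every basic ball j into nested balls whose centres return
     under T^(q_k) and whose radii tend to 0.  Completeness provides limit
     points y_j, which are dense and satisfy T^(q_k) y_j --> y_j. *)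

Lemma iter_diagN (X : topologicalType) (N : nat) (T : X -> X) (n : nat)
    (x : {ptws 'I_N -> X}) :
  iter n (diagN N T) x = fun i => iter n T (x i).
Proof. by elim: n => [|n IH] //=; rewrite IH. Qed.

Lemma ptws_cvg (I : eqType) (X : topologicalType) (F : set_system (I -> X))
    (f : I -> X) : Filter F ->
  (forall i, (fun g => g i) @ F --> f i) -> F --> (f : {ptws I -> X}).
Proof.
move=> FF Fcvg; apply/cvg_sup => i A /=.
rewrite (@nbhsE (initial_topology (fun g : I -> X => g i))) /=.
move=> -[B [oB Bf] BA]; case: oB => C oC CB; rewrite -CB in Bf BA.
have /Fcvg /= FC : nbhs (f i) C by rewrite nbhsE /=; exists C.
have CA : [set g : I -> X | C (g i)] `<=` A by move=> g; exact: BA.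
exact: filterS CA FC.
Qed.

(* Open boxes are open in X^N: they are finite intersections of cylinders. *)
Lemma box_open {X : topologicalType} {N : nat} {U : 'I_N -> set X} :
  (forall i, open (U i)) ->
  open ([set x | forall i, U i (x i)] : set {ptws 'I_N -> X}).
Proof.
move=> oU; rewrite openE => x Ux.
have cyl i : \forall y \near (x : {ptws 'I_N -> X}), U i (y i).
  by apply: (@proj_continuous 'I_N (fun _ => X) i x); exact: open_nbhs_nbhs.
exact: (@filter_forall _ 'I_N (fun i y => U i (y i)) _ (nbhs_filter x) cyl).
Qed.

Lemma continuous_iter {X : topologicalType} {T : X -> X} (n : nat) :
  continuous T -> continuous (iter n T).
Proof.
move=> cT; elim: n => [|n IH] x /=; first exact: cvg_id.
exact: (continuous_comp (IH x) (cT _)).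
Qed.

Lemma inv_small {R : realType} {e : R} : 0 < e ->
  exists M : nat, forall m, (M <= m)%N -> m.+1%:R^-1 < e.
Proof.
move=> e0; have [M _ HM] := nbhs_infty_gtr e^-1.
exists M => m Mm; rewrite invf_plt ?posrE ?ltr0n //.
by apply: lt_le_trans (HM m Mm) _; rewrite ler_nat.
Qed.

Lemma dense_ball {R : realType} {X : pseudoMetricType R} {D : set X} (x : X)
    {e : R} : dense D -> 0 < e -> exists d, D d /\ ball x e d.
Proof.
move=> dD e0; have [Ox xO] := open_nbhs_ball x (PosNum e0).
have [d [Bd Dd]] := dD _ (ex_intro _ x xO) Ox.
by exists d; split => //; exact: interior_subset.
Qed.

Lemma countable_ball_base {R : realType} {X : pseudoMetricType R} (x0 : X) :
  separable_space X ->
  exists (cen : nat -> X) (rad : nat -> R), (forall p, 0 < rad p) /\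
    forall U : set X, open U -> U !=set0 -> exists p, ball (cen p) (rad p) `<=` U.
Proof.
move=> [D [/countable_injP[f finj] dD]].
pose code p := odflt (0%N, 0%N) (unpickle p).
exists (fun p => 'pinv_(fun=> x0) D f (code p).1), (fun p => (code p).2.+1%:R^-1).
split=> [p|U oU [x Ux]]; first by rewrite invr_gt0.
have /nbhs_ballP[e /= e0 eU] : nbhs x U by exact: open_nbhs_nbhs.
have e20 : 0 < e / 2 by rewrite divr_gt0.
have [d [Dd xd]] := dense_ball x dD e20.
have [M HM] := inv_small e20.
exists (pickle (f d, M)); rewrite /code pickleK /= pinvKV ?inE // => z dz.
by apply/eU/(ball_split xd)/(le_ball (ltW (HM M (leqnn M))) dz).
Qed.

Lemma recurrent_top_recurrent {Y : topologicalType} {S : Y -> Y} :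
  recurrent S -> top_recurrent S.
Proof.
move=> rS U oU U0; have [x [Ux rx]] := rS U U0 oU.
have /rx [_ [[n _ <-] Uy]] : nbhs x U by exact: open_nbhs_nbhs.
by exists n.+1; split => //; exists (iter n.+1 S x); split => //; exists x.
Qed.

Lemma quasi_rigid_top_quasi_rigid {Y : topologicalType} {T : Y -> Y} :
  quasi_rigid T -> top_quasi_rigid T.
Proof.
move=> [n [D [n_incr [dD cvgD]]]]; exists n; split => // U oU U0.
have [x [Ux Dx]] := dD U U0 oU.
have /(cvgD x Dx) [K _ HK] : nbhs x U by exact: open_nbhs_nbhs.
by exists K => k Kk; exists (iter (n k) T x); split; [exists x | exact: HK].
Qed.

(* A point that is the limit of its iterates along a strictly increasing
   sequence of times is recurrent (the times are eventually positive). *)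
Lemma cvg_iter_recurrent_point {Y : topologicalType} {S : Y -> Y}
    {n : nat -> nat} {x : Y} : {homo n : a b / (a < b)%N} ->
  (fun k => iter (n k) S x) @ \oo --> x -> recurrent_point S x.
Proof.
move=> n_incr cvgx B Bx.
have {}Bx : \forall k \near \oo, B (iter (n k) S x) := cvgx B Bx.
have [K _ HK] := filterI Bx (nbhs_infty_ge 1).
have [BK K1] := HK K (leqnn K).
have nK0 : (0 < n K)%N by apply: leq_ltn_trans (n_incr 0%N K K1).
by exists (iter (n K) S x); split => //; exists (n K).-1 => //; rewrite prednK.
Qed.

(* If D is dense in X, the points of X^N with all coordinates in D are
   dense: approximate each coordinate by points of D at distance 1/(m+1). *)
Lemma dense_coordinatewise {R : realType} {X : pseudoMetricType R} (N : nat)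
    {D : set X} : dense D ->
  dense ([set x | forall i, D (x i)] : set {ptws 'I_N -> X}).
Proof.
move=> dD O [x Ox] oO.
have inv_gt0 (m : nat) : 0 < (m.+1%:R : R)^-1 by rewrite invr_gt0.
have [u Hu] := choice (fun mi : nat * 'I_N => dense_ball (x mi.2) dD (inv_gt0 mi.1)).
pose v m : {ptws 'I_N -> X} := fun i => u (m, i).
have vx : v @ \oo --> (x : {ptws 'I_N -> X}).
  apply: ptws_cvg => i; apply/cvg_ballP => e e0.
  have [M HM] := inv_small e0.
  apply: filterS (nbhs_infty_ge M) => m Mm /=.
  exact: (le_ball (ltW (HM m Mm)) (Hu (m, i)).2).
have /vx [M _ HM] : nbhs (x : {ptws 'I_N -> X}) O by exact: open_nbhs_nbhs.
by exists (v M); split; [exact: (HM M (leqnn M)) | move=> i; exact: (Hu (M, i)).1].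
Qed.

(* (i) -> (iv): coordinatewise quasi-rigid points of X^N are recurrent for
   T_(N), and they are dense. *)
Lemma quasi_rigid_recurrent_diag {R : realType} {X : pseudoMetricType R}
    {T : X -> X} : quasi_rigid T ->
  forall N : nat, (0 < N)%N -> recurrent (diagN N T).
Proof.
move=> [n [D [n_incr [dD cvgD]]]] N _ O O0 oO.
have [x [Ox Dx]] := dense_coordinatewise N dD _ O0 oO.
exists x; split => //; apply: (cvg_iter_recurrent_point n_incr).
apply: ptws_cvg => i A /(cvgD _ (Dx i)); rewrite !nbhs_simpl /=.
by apply: filterS => k /=; rewrite iter_diagN.
Qed.

(* Topological recurrence of T_(N), applied to an open box, gives a single
   positive time at which N given non-empty open sets all return into
   themselves. *)
Lemma box_return_time {X : topologicalType} {T : X -> X} {N : nat}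
    {U : 'I_N -> set X} : top_recurrent (diagN N T) ->
  (forall i, open (U i)) -> (forall i, U i !=set0) ->
  exists r, (0 < r)%N /\
    exists x : 'I_N -> X, forall i, U i (x i) /\ U i (iter r T (x i)).
Proof.
move=> recN oU nU; have [u Uu] := choice nU.
have [r [r0 [_ [[x Ux <-] Urx]]]] := recN _ (box_open oU) (ex_intro _ u Uu).
by exists r; split => //; exists x => i; split; [exact: Ux | move: (Urx i); rewrite iter_diagN].
Qed.

(* Iterating box_return_time on the sets U i /\ T^(-r) (U i) produces common
   return times of N open sets beyond any prescribed bound M. *)
Lemma common_return_time {X : topologicalType} {T : X -> X} {N : nat}
    (U : 'I_N -> set X) : continuous T -> top_recurrent (diagN N T) ->
  (forall i, open (U i)) -> (forall i, U i !=set0) ->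
  forall M : nat, exists r, (M < r)%N /\
    exists x : 'I_N -> X, forall i, U i (x i) /\ U i (iter r T (x i)).
Proof.
move=> cT recN + + M; elim: M U => [|M IH] U oU nU.
  by have [r [r0 Hr]] := box_return_time recN oU nU; exists r.
have [r [r0 [x Hx]]] := box_return_time recN oU nU.
pose V i := U i `&` iter r T @^-1` U i.
have oV i : open (V i).
  by apply: openI => //; apply: open_comp => // y _; exact: continuous_iter.
have [m [Mm [y Hy]]] := IH V oV (fun i => ex_intro _ (x i) (Hx i)).
exists (r + m)%N; split; first by rewrite -addn1 addnC leq_add.
by exists y => i; have [[Uy _] [_ Uy']] := Hy i; rewrite iterD.
Qed.

(* (iii) -> (ii): with a countable base of balls B_0, B_1, ..., choose
   inductively n_k > n_(k-1) which is a common return time of B_0, ..., B_k;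
   then every open set contains some B_p, which returns at all n_k, k >= p. *)
Lemma top_quasi_rigid_of_diag_recurrence {R : realType}
    {X : pseudoMetricType R} (x0 : X) {T : X -> X} :
  separable_space X -> continuous T ->
  (forall N : nat, (0 < N)%N -> top_recurrent (diagN N T)) -> top_quasi_rigid T.
Proof.
move=> sepX cT recT.
have [cen [rad [rad_gt0 base]]] := countable_ball_base x0 sepX.
pose B p := (ball (cen p) (rad p))°.
have oB p : open (B p) by exact: open_interior.
have nB p : B p !=set0 by exists (cen p); exact: nbhsx_ballx.
have [t tP] := choice (fun kM : nat * nat =>
  common_return_time (fun i : 'I_kM.1.+1 => B i) cT (recT _ (ltn0Sn _))
    (fun i => oB i) (fun i => nB i) kM.2).
pose fix n k := if k is k'.+1 then t (k, n k') else t (0%N, 0%N).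
have n_def k : exists M, n k = t (k, M) by case: k => [|k]; [exists 0%N | exists (n k)].
exists n; split; first by apply: (homo_ltn ltn_trans) => k; exact: (tP (k.+1, n k)).1.
move=> U oU nU; have [p pU] := base U oU nU.
exists p => k pk; have [M ->] := n_def k.
have [_ [x Hx]] := tP (k, M).
pose i : 'I_k.+1 := @Ordinal k.+1 p pk.
have [Bx Bnx] := Hx i.
exists (iter (t (k, M)) T (x i)); split; last exact/pU/(interior_subset Bnx).
by exists (x i) => //; exact/pU/(interior_subset Bx).
Qed.

(* The section parameters are choice functions extracted from
   topological quasi-rigidity along the sequence n, from the neighbourhood
   structure of X, and from a countable base of balls. *)
Section NestedBalls.
Variables (R : realType) (X : completePseudoMetricType R) (T : X -> X).
Hypothesis cT : continuous T.

Variables (n : nat -> nat) (kU : set X -> nat) (ret : set X -> nat -> X).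
Hypothesis n_incr : {homo n : a b / (a < b)%N}.
Hypothesis retP : forall U k, open U -> U !=set0 -> (kU U <= k)%N ->
  U (ret U k) /\ U (iter (n k) T (ret U k)).

Variable rsel : X -> set X -> R.
Hypothesis rselP : forall x V, 0 < rsel x V /\ (nbhs x V -> ball x (rsel x V) `<=` V).

Variables (cen : nat -> X) (rad : nat -> R).
Hypothesis rad_gt0 : forall p, 0 < rad p.
Hypothesis ball_base :
  forall U : set X, open U -> U !=set0 -> exists p, ball (cen p) (rad p) `<=` U.

Record stage := Stage { st_time : nat; st_centre : nat -> X; st_radius : nat -> R }.

Definition core (s : stage) (j : nat) : set X :=
  (ball (st_centre s j) (st_radius s j / 4))°.

Definition next_time (k : nat) (s : stage) : nat :=
  maxn (st_time s).+1 (\max_(j < k.+1) kU (core s j)).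

Definition next_centre (k : nat) (s : stage) (j : nat) : X :=
  if (j <= k)%N then ret (core s j) (next_time k s) else st_centre s j.

(* The new radius is at most a quarter of the old one, at most 1/(k+1), and
   for j <= k small enough for the new ball to return into the core. *)
Definition next_radius (k : nat) (s : stage) (j : nat) : R :=
  Num.min (Num.min (st_radius s j / 4) k.+1%:R^-1)
    (if (j <= k)%N
     then rsel (next_centre k s j) (iter (n (next_time k s)) T @^-1` core s j)
     else 1).

Definition next_stage (k : nat) (s : stage) : stage :=
  Stage (next_time k s) (next_centre k s) (next_radius k s).

Fixpoint stages (k : nat) : stage :=
  if k is k'.+1 then next_stage k' (stages k') else Stage 0 cen rad.

Definition ctr (k j : nat) : X := st_centre (stages k) j.
Definition rds (k j : nat) : R := st_radius (stages k) j.
Definition qtime (k : nat) : nat := n (st_time (stages k.+1)).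

Lemma rds_gt0 k j : 0 < rds k j.
Proof.
elim: k j => [|k IH] j /=; first exact: rad_gt0.
rewrite /rds /= /next_radius !lt_min divr_gt0 ?IH ?invr_gt0 ?ltr0n //=.
by case: ifP => _; [exact: (rselP _ _).1 | exact: ltr01].
Qed.

Lemma rds_shrink k j : rds k.+1 j <= rds k j / 4.
Proof. by rewrite /rds /= /next_radius !ge_min lexx. Qed.

Lemma rds_small k j : rds k.+1 j <= k.+1%:R^-1.
Proof. by rewrite /rds /= /next_radius !ge_min lexx orbT. Qed.

Lemma qtime_incr : {homo qtime : a b / (a < b)%N}.
Proof.
apply: (homo_ltn ltn_trans) => k; apply: n_incr.
by rewrite /= /next_time leq_maxl.
Qed.

Lemma core_admissible {k j : nat} : (j <= k)%N ->
  let C := core (stages k) j in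
  [/\ open C, C !=set0 & (kU C <= next_time k (stages k))%N].
Proof.
move=> jk C; split; first exact: open_interior.
  by exists (ctr k j); apply: nbhsx_ballx; rewrite divr_gt0 // rds_gt0.
rewrite /next_time (leq_trans _ (leq_maxr _ _)) //.
have jk' : (j < k.+1)%N by rewrite ltnS.
exact: (@leq_bigmax _ (fun i : 'I_k.+1 => kU (core (stages k) i)) (Ordinal jk')).
Qed.

Lemma ctr_step k j : ball (ctr k j) (rds k j / 4) (ctr k.+1 j).
Proof.
rewrite /ctr /= /next_centre; case: ifP => jk.
  have [oC nC kC] := core_admissible jk.
  exact: interior_subset (retP _ _ oC nC kC).1.
by apply: ballxx; rewrite divr_gt0 // rds_gt0.
Qed.

Lemma ball_return {k j : nat} : (j <= k)%N ->
  ball (ctr k.+1 j) (rds k.+1 j) `<=`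
  iter (qtime k) T @^-1` ball (ctr k j) (rds k j / 4).
Proof.
move=> jk; have [oC nC kC] := core_admissible jk.
set m := n (next_time k (stages k)).
set V := iter m T @^-1` core (stages k) j.
have ctrV : nbhs (ctr k.+1 j) V.
  apply: (continuous_iter m cT); apply: open_nbhs_nbhs; split => //.
  by rewrite /ctr /= /next_centre jk; exact: (retP _ _ oC nC kC).2.
have sub_rsel : rds k.+1 j <= rsel (ctr k.+1 j) V.
  by rewrite /rds /= /next_radius jk ge_min lexx orbT.
move=> z /(le_ball sub_rsel) /((rselP _ _).2 ctrV) Vz.
exact: interior_subset Vz.
Qed.

Lemma ball_nested k j : ball (ctr k.+1 j) (rds k.+1 j) `<=` ball (ctr k j) (rds k j / 2).
Proof.
move=> z /(ball_triangle (ctr_step k j)); apply: le_ball.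
by have := rds_shrink k j; have := rds_gt0 k j; lra.
Qed.

Lemma ball_nested_iter K d j :
  ball (ctr (K + d) j) (rds (K + d) j / 2) `<=` ball (ctr K j) (rds K j / 2).
Proof.
elim: d => [|d IH]; first by rewrite addn0.
rewrite addnS => z bz; apply/IH/ball_nested/(le_ball _ bz).
by have := rds_gt0 (K + d).+1 j; lra.
Qed.

Definition y (j : nat) : X := lim ((fun k => ctr k j) @ \oo).

Lemma ctr_cvg j : (fun k => ctr k j) @ \oo --> y j.
Proof.
apply: cauchy_cvg; apply: cauchy_exP => e e0.
have [M HM] := inv_small e0.
exists (ctr M.+1 j); apply: filterS (nbhs_infty_ge M.+1) => l Ml /=.
have r20 : 0 < rds l j / 2 by rewrite divr_gt0 // rds_gt0.
rewrite -(subnKC Ml) in r20 *.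
have := ball_nested_iter M.+1 (l - M.+1) j _ (ballxx _ r20); apply: le_ball.
have := rds_small M j; have := HM M (leqnn M); have := rds_gt0 M.+1 j.
by move: (M.+1%:R^-1 : R) => a; lra.
Qed.

Lemma y_in_ball K j : ball (ctr K j) (rds K j) (y j).
Proof.
have r20 : 0 < rds K j / 2 by rewrite divr_gt0 // rds_gt0.
have ycl : closure (ball (ctr K j) (rds K j / 2)) (y j).
  apply: (@closed_cvg _ _ _ _ (fun k => ctr k j) _ (@closed_closure _ _) _ _ (ctr_cvg j)).
  apply: filterS (nbhs_infty_ge K) => l Kl; apply: subset_closure.
  rewrite -(subnKC Kl); apply/ball_nested_iter/ballxx.
  by rewrite divr_gt0 // rds_gt0.
have [z [bz bz']] := ycl _ (nbhsx_ballx (y j) _ r20).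
exact: ball_splitl bz bz'.
Qed.

(* Each y j is a quasi-rigid point along q: for k >= j both y j and
   T^(q_k) (y j) lie in the k-th ball, whose radius is at most 1/k. *)
Lemma y_quasi_rigid j : (fun k => iter (qtime k) T (y j)) @ \oo --> y j.
Proof.
apply/cvg_ballP => e e0; have e20 : 0 < e / 2 by rewrite divr_gt0.
have [M HM] := inv_small e20.
apply: filterS (nbhs_infty_ge (maxn j M).+1) => -[//|k].
rewrite ltnS geq_max => /andP[jk Mk].
have /= Ty := ball_return (leqW jk) _ (y_in_ball k.+2 j).
apply: (le_ball _ (ball_triangle (ball_sym (y_in_ball k.+1 j)) Ty)).
have := rds_small k j; have := HM k Mk; have := rds_gt0 k.+1 j.
by move: (k.+1%:R^-1 : R) => a; lra.
Qed.

Lemma quasi_rigid_of_nested_balls : quasi_rigid T.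
Proof.
exists qtime, (range y); split; first exact: qtime_incr.
split; last by move=> _ [j _ <-]; exact: y_quasi_rigid.
move=> U nU oU; have [p pU] := ball_base _ oU nU.
by exists (y p); split; [exact/pU/(y_in_ball 0 p) | exists p].
Qed.

End NestedBalls.

(* (ii) -> (i): the choice functions required by the nested-ball
   construction exist by (ii), by the definition of neighbourhoods in a
   pseudometric space, and by separability. *)
Lemma quasi_rigid_of_top_quasi_rigid {R : realType}
    {X : completePseudoMetricType R} {T : X -> X} :
  separable_space X -> continuous T -> top_quasi_rigid T -> quasi_rigid T.
Proof.
move=> sepX cT [n [n_incr qrT]].
have [cen [rad [rad_gt0 base]]] := countable_ball_base (point : X) sepX.
have kUex (U : set X) : exists K : nat, open U -> U !=set0 ->
    forall k, (K <= k)%N -> (iter (n k) T @` U) `&` U !=set0.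
  case: (pselect (open U /\ U !=set0)) => [[oU nU]|nU].
    by have [K HK] := qrT U oU nU; exists K.
  by exists 0%N => oU U0; case: nU.
have [kU kUP] := choice kUex.
have retex (Uk : set X * nat) : exists x : X,
    open Uk.1 -> Uk.1 !=set0 -> (kU Uk.1 <= Uk.2)%N ->
    Uk.1 x /\ Uk.1 (iter (n Uk.2) T x).
  case: Uk => U k /=; case: (pselect (open U /\ U !=set0 /\ (kU U <= k)%N)).
    by move=> [oU [nU kk]]; have [_ [[x Ux <-] Ux']] := kUP U oU nU k kk; exists x.
  by move=> h; exists point => oU nU kk; case: h.
have [ret retP] := choice retex.
have rselex (xV : X * set X) : exists e : R,
    0 < e /\ (nbhs xV.1 xV.2 -> ball xV.1 e `<=` xV.2).
  case: (pselect (nbhs xV.1 xV.2)) => [/nbhs_ballP[e e0 eV]|nV]; first by exists e.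
  by exists 1; split => // /nV.
have [rsel rselP] := choice rselex.
apply: (@quasi_rigid_of_nested_balls R X T cT n kU (fun U k => ret (U, k)) n_incr
  _ (fun x V => rsel (x, V)) _ cen rad rad_gt0 base).
- by move=> U k; exact: (retP (U, k)).
- by move=> x V; exact: (rselP (x, V)).
Qed.

Theorem mainTheorem3 (R : realType) (X : completePseudoMetricType R)
  (hX : hausdorff_space X) (sepX : separable_space X)
  (T : X -> X) (cT : continuous T) :
  [/\ (quasi_rigid T <-> top_quasi_rigid T),
      (top_quasi_rigid T <-> forall N : nat, (0 < N)%N -> top_recurrent (diagN N T)) &
      ((forall N : nat, (0 < N)%N -> top_recurrent (diagN N T)) <->
       (forall N : nat, (0 < N)%N -> recurrent (diagN N T)))].
Proof.
have ii_i := quasi_rigid_of_top_quasi_rigid sepX cT.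
have iii_ii := top_quasi_rigid_of_diag_recurrence (point : X) sepX cT.
have iv_iii : (forall N : nat, (0 < N)%N -> recurrent (diagN N T)) ->
    forall N : nat, (0 < N)%N -> top_recurrent (diagN N T).
  by move=> recT N N0; exact/recurrent_top_recurrent/recT.
split; split.
- exact: quasi_rigid_top_quasi_rigid.
- exact: ii_i.
- by move=> /ii_i /quasi_rigid_recurrent_diag /iv_iii.
- exact: iii_ii.
- by move=> /iii_ii /ii_i /quasi_rigid_recurrent_diag.
- exact: iv_iii.
Qed.
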